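(* Let $G\ge 2$ and $p_t\in[0,1]$. Let $r_{t,1},\dots,r_{t,G}\in\{0,1\}$ be the rewards of a group, $R=\sum_j r_{t,j}$, $\hat p_t=R/G$, $\hat A_{t,i}=r_{t,i}-\hat p_t$, $A_{t,i}=r_{t,i}-p_t$, and $\mathcal S=\{1\le R\le G-1\}$. Then on the event $\mathcal S$, for every $i\in[G]$: $\hat A_{t,i}<A_{t,i}$ surely if $p_t<1/G$, and $\hat A_{t,i}>A_{t,i}$ surely if $p_t>(G-1)/G$.
   Context: $p_t$ is the expected reward of the policy on the prompt; $\hat p_t$ is the group baseline, $\hat A_{t,i}$ the group-relative advantage, $A_{t,i}$ the expected advantage, and $\mathcal S$ the event that the group is neither all-correct nor all-incorrect. *)

From mathcomp Require Import all_boot all_order all_algebra.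
Set Implicit Arguments. Unset Strict Implicit. Unset Printing Implicit Defensive.
Import Order.TTheory GRing.Theory Num.Theory.
Local Open Scope ring_scope.

Definition group_count (G : nat) (r : 'I_G -> bool) : nat :=
  (\sum_(j < G) (r j : nat))%N.

Definition phat {F : realFieldType} (G : nat) (r : 'I_G -> bool) : F :=
  (group_count r)%:R / G%:R.

Definition Ahat {F : realFieldType} (G : nat) (r : 'I_G -> bool) (i : 'I_G) : F :=
  (r i)%:R - phat r.

Definition Aexp {F : realFieldType} (G : nat) (p : F) (r : 'I_G -> bool) (i : 'I_G) : F :=
  (r i)%:R - p.

Definition eventS (G : nat) (r : 'I_G -> bool) : bool :=
  (1 <= group_count r <= G.-1)%N.

(* Ahat - Aexp = p - phat, and on S the group baseline phat = R/G lies in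
   [1/G, (G-1)/G]; so p below 1/G lies strictly below phat, and p above
   (G-1)/G strictly above it. *)
From mathcomp Require Import all_boot all_order all_algebra.
Import Order.TTheory GRing.Theory Num.Theory.
Local Open Scope ring_scope.

Section GroupBaseline.

Variables (F : realFieldType) (G : nat) (r : 'I_G -> bool).

Lemma ltr_Ahat_Aexp (p : F) (i : 'I_G) : (Ahat r i < Aexp p r i) = (p < phat r).
Proof. by rewrite /Ahat /Aexp ltrD2l ltrN2. Qed.

Lemma ltr_Aexp_Ahat (p : F) (i : 'I_G) : (Aexp p r i < Ahat r i) = (phat r < p).
Proof. by rewrite /Ahat /Aexp ltrD2l ltrN2. Qed.

Hypothesis S : eventS r.

Lemma eventS_gt0 : (0 < G)%N.
Proof. by case/andP: S => /leq_trans le1R /le1R; case: G. Qed.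

Lemma eventS_phat_ge : 1 / G%:R <= phat r :> F.
Proof.
case/andP: S => le1R _.
by rewrite /phat ler_pM2r ?invr_gt0 ?ltr0n ?eventS_gt0 // ler1n.
Qed.

Lemma eventS_phat_le : phat r <= (G%:R - 1) / G%:R :> F.
Proof.
case/andP: S => _ leRG.
rewrite /phat ler_pM2r ?invr_gt0 ?ltr0n ?eventS_gt0 //.
have -> : G%:R - 1 = G.-1%:R :> F by rewrite -{1}(prednK eventS_gt0) -natr1 addrK.
by rewrite ler_nat.
Qed.

End GroupBaseline.

Theorem corollary3 (F : realFieldType) (G : nat) (p : F) :
  (2 <= G)%N -> 0 <= p <= 1 ->
  forall (r : 'I_G -> bool), eventS r ->
  forall i : 'I_G,
    (p < 1 / G%:R -> Ahat r i < Aexp p r i) /\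
    (p > (G%:R - 1) / G%:R -> Ahat r i > Aexp p r i).
Proof.
move=> _ _ r S i; split=> Hp.
- by rewrite ltr_Ahat_Aexp (lt_le_trans Hp) ?eventS_phat_ge.
- by rewrite ltr_Aexp_Ahat (le_lt_trans _ Hp) ?eventS_phat_le.
Qed.
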